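(* Let $G$ be a DAG and let $S\subseteq E(G)$ be a matching of reversible edges of $G$ (a set of reversible edges no two of which share an endpoint). Then $|\mathrm{MEC}(G)|\ge 2^{|S|}$.
   Context: An edge $v\to w$ of a DAG $G$ is reversible if replacing it by $w\to v$ yields a DAG that is Markov equivalent to $G$. Markov equivalence: two DAGs on the same vertex set are Markov equivalent if they have the same d-separation statements, where for vertices $a\neq b$ and $Z\subseteq V\setminus\{a,b\}$, $a,b$ are d-connected given $Z$ if there is a path (sequence of vertices, consecutive ones joined by an edge of either direction, endpoints $a\ne b$) on which every internal non-collider is not in $Z$ and every collider (internal vertex with both adjacent path-edges pointing into it) is in $Z$ or has a descendant (itself or a vertex reachable by a directed path) in $Z$; otherwise d-separated. $\mathrm{MEC}(G)$ is the set of DAGs Markov equivalent to $G$. *)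

From mathcomp Require Import all_boot.
From mathcomp Require Import boolp.

Set Implicit Arguments.
Unset Strict Implicit.
Unset Printing Implicit Defensive.

Section DAGs.
Variable V : finType.

(* A directed graph on the vertex set V is a set of ordered pairs;
   (v, w) \in G means the edge v -> w. *)
Definition edge_rel (G : {set V * V}) : rel V := fun x y => (x, y) \in G.

(* DAG: no directed cycle (this also excludes self-loops). *)
Definition is_dag (G : {set V * V}) : Prop :=
  forall x y, (x, y) \in G -> ~~ connect (edge_rel G) y x.

Definition descendant (G : {set V * V}) (x d : V) : bool :=
  connect (edge_rel G) x d.

Definition adjacent (G : {set V * V}) : rel V :=
  fun x y => ((x, y) \in G) || ((y, x) \in G).

Definition collider (G : {set V * V}) (u x w : V) : bool :=
  ((u, x) \in G) && ((w, x) \in G).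

Definition d_connected (G : {set V * V}) (a b : V) (Z : {set V}) : Prop :=
  a != b /\
  exists mid : seq V,
    let s := a :: rcons mid b in
    path (adjacent G) a (rcons mid b) /\
    forall i, 0 < i -> i < (size s).-1 ->
      let u := nth a s i.-1 in
      let x := nth a s i in
      let w := nth a s i.+1 in
      if collider G u x w then (exists2 z, z \in Z & descendant G x z)
      else x \notin Z.

Definition d_separated (G : {set V * V}) (a b : V) (Z : {set V}) : Prop :=
  ~ d_connected G a b Z.

Definition markov_equiv (G H : {set V * V}) : Prop :=
  forall (a b : V) (Z : {set V}), a != b -> a \notin Z -> b \notin Z ->
    (d_separated G a b Z <-> d_separated H a b Z).

Definition MEC (G : {set V * V}) : {set {set V * V}} :=
  [set H : {set V * V} | `[< is_dag H /\ markov_equiv G H >]].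

Definition reverse_edge (G : {set V * V}) (e : V * V) : {set V * V} :=
  (G :\ e) :|: [set (e.2, e.1)].

Definition reversible (G : {set V * V}) (e : V * V) : Prop :=
  e \in G /\ is_dag (reverse_edge G e) /\ markov_equiv G (reverse_edge G e).

Definition is_matching (S : {set V * V}) : Prop :=
  forall e f, e \in S -> f \in S -> e != f ->
    [/\ e.1 != f.1, e.1 != f.2, e.2 != f.1 & e.2 != f.2].

End DAGs.

From mathcomp Require Import all_boot.
From mathcomp Require Import boolp.

(* A reversible edge v -> w is covered, i.e. pa(w) = pa(v) + {v}: otherwise some
   z is a parent of exactly one of v, w; then z and the other endpoint are
   non-adjacent in both graphs, d-separated in one of them by the parents of one
   of the two, while the other graph joins them by an open path through the
   remaining endpoint.  Conversely, reversing a covered edge preserves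
   acyclicity and d-connection: on Bayes-ball walks the reversal only changes
   how a walk crosses the block {v, w}, and since v and w have the same outside
   parents, every way of entering and leaving the block survives.  The edges of
   a matching stay covered when the others are reversed, so each of the 2^|S|
   subsets of S can be reversed, giving distinct members of MEC(G). *)

Set Implicit Arguments.
Unset Strict Implicit.
Unset Printing Implicit Defensive.

Lemma connect_first (T : finType) (e : rel T) x y : connect e x y -> x != y ->
  exists2 c, e x c & connect e c y.
Proof.
move=> /connectP [[|c p]] /=; first by move=> _ ->; rewrite eqxx.
by move=> /andP [xc pc] -> _; exists c => //; apply/connectP; exists p.
Qed.

Lemma connect_last (T : finType) (e : rel T) x y : connect e x y -> x != y ->
  exists2 c, connect e x c & e c y.
Proof.
move=> /connectP [p]; case/lastP: p => [|p c] /=; first by move=> _ ->; rewrite eqxx.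
rewrite rcons_path last_rcons => /andP [pp ec] -> _.
by exists (last x p) => //; apply/connectP; exists p.
Qed.

Definition triples_ok (T : Type) (P : T -> T -> T -> Prop) (x0 : T) (s : seq T) : Prop :=
  forall i, 0 < i -> i < (size s).-1 ->
    P (nth x0 s i.-1) (nth x0 s i) (nth x0 s i.+1).

Lemma triples_ok_rcons (T : Type) (P : T -> T -> T -> Prop) x0 s b : 1 < size s ->
  triples_ok P x0 (rcons s b) <->
  triples_ok P x0 s /\ P (nth x0 s (size s).-2) (nth x0 s (size s).-1) b.
Proof.
case: s => [|y s] // n_gt0; set t := y :: s; set n := size s.
have size_t : size t = n.+1 by [].
have nth_s i : i <= n -> nth x0 (rcons t b) i = nth x0 t i.
  by move=> le_in; rewrite nth_rcons size_t ltnS le_in.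
have nth_b : nth x0 (rcons t b) n.+1 = b by rewrite nth_rcons size_t ltnn eqxx.
rewrite /triples_ok size_rcons size_t !succnK.
split=> [P_all | [P_t P_n] i i_gt0 lt_i].
  split=> [i i_gt0 lt_i|].
    have le_in := ltnW lt_i; have le_pi := leq_trans (leq_pred i) le_in.
    by have := P_all i i_gt0 (ltnW lt_i); rewrite !nth_s.
  by have := P_all n n_gt0 (ltnSn n); rewrite nth_b !nth_s ?leq_pred.
have [lt_in|] := ltnP i n.
  have le_in := ltnW lt_in; have le_pi := leq_trans (leq_pred i) le_in.
  by rewrite !nth_s //; apply: P_t.
move=> le_ni; have -> : i = n by apply/eqP; rewrite eqn_leq le_ni andbT -ltnS.
by rewrite nth_b !nth_s ?leq_pred.
Qed.

Lemma nth_cons_rcons_last (T : Type) (a : T) m x (s := a :: rcons m x) :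
  nth a s (size s).-2 = last a m /\ nth a s (size s).-1 = x.
Proof.
rewrite /s [size _]/= size_rcons !succnK; split; last by rewrite /= nth_rcons ltnn eqxx.
have -> : a :: rcons m x = rcons (a :: m) x by [].
by rewrite nth_rcons /= ltnS leqnn -[size m]/((size (a :: m)).-1) nth_last.
Qed.

Section ActiveWalks.
Variable V : finType.
Implicit Types (G H : {set V * V}) (Z : {set V}) (a b x y z : V).

Lemma dag_irrefl G x : is_dag G -> (x, x) \notin G.
Proof. by move=> dG; apply/negP => /dG; rewrite connect0. Qed.

Lemma dag_asym G x y : is_dag G -> (x, y) \in G -> (y, x) \notin G.
Proof. by move=> dG xy; apply/negP => yx; move: (dG _ _ xy); rewrite connect1. Qed.

Lemma dag_connect_antisym G x y : is_dag G ->
  connect (edge_rel G) x y -> connect (edge_rel G) y x -> x = y.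
Proof.
move=> dG xy yx; apply/eqP/negPn/negP => x_neq_y.
have [c xc cy] := connect_first xy x_neq_y.
by move: (dG _ _ xc); rewrite (connect_trans cy yx).
Qed.

Definition d_connecting G Z (u x w : V) : Prop :=
  if collider G u x w then exists2 z, z \in Z & descendant G x z else x \notin Z.

(* Bayes-ball reachability: a walk from [a] to [y] whose internal vertices lie
   in [Z] exactly when they are colliders; [h] tells whether its last edge
   points into [y]. *)
Inductive active_walk G Z a : V -> bool -> Prop :=
| active_start y : adjacent G a y -> active_walk G Z a y ((a, y) \in G)
| active_step x h y : active_walk G Z a x h -> adjacent G x y ->
    (h && ((y, x) \in G)) = (x \in Z) -> active_walk G Z a y ((x, y) \in G).

Lemma active_walk_path G Z a y h : active_walk G Z a y h ->
  exists mid, [/\ path (adjacent G) a (rcons mid y),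
    triples_ok (d_connecting G Z) a (a :: rcons mid y) & ((last a mid, y) \in G) = h].
Proof.
elim=> [y0 ay | x h0 y0 _ [mid [walk_mid ok_mid last_mid]] xy0 collider_Z].
  by exists [::]; split => //=; [rewrite ay | case=> [|[]]].
exists (rcons mid x); split; last by rewrite last_rcons.
  by rewrite rcons_path walk_mid last_rcons.
rewrite -rcons_cons; apply/triples_ok_rcons; first by rewrite /= size_rcons.
have [-> ->] := nth_cons_rcons_last a mid x; split=> //.
rewrite /d_connecting /collider last_mid; case: ifP => [/andP [into_x yx]|not_coll].
  by exists x; [rewrite -collider_Z into_x yx | exact: connect0].
by rewrite -collider_Z; apply: contraFN not_coll => /andP [-> ->].
Qed.

Lemma active_walk_d_connected G Z a b h :
  a != b -> active_walk G Z a b h -> d_connected G a b Z.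
Proof. by move=> ab /active_walk_path [mid [walk ok _]]; split=> //; exists mid. Qed.

(* A collider outside [Z] with a descendant in [Z] is bypassed by walking down
   to that descendant and back up. *)
Lemma active_walk_detour G Z a x h : is_dag G -> active_walk G Z a x h ->
  x \notin Z -> (exists2 z, z \in Z & descendant G x z) -> active_walk G Z a x false.
Proof.
move=> dG + + [z zZ /connectP [p]].
elim: p x h => [|c p IH] x h walk_x xZ /=; first by move=> _ eq_z; rewrite -eq_z zZ in xZ.
move=> /andP [xc down_c] last_z; have {}xc : (x, c) \in G := xc; have cx := dag_asym dG xc.
have adj_cx : adjacent G c x by rewrite /adjacent xc orbT.
have walk_c : active_walk G Z a c true.
  rewrite -[true]xc; apply: active_step walk_x _ _; first by rewrite /adjacent xc.
  by rewrite (negbTE cx) andbF (negbTE xZ).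
rewrite -[false](negbTE cx); have [cZ|cZ] := boolP (c \in Z).
  by apply: active_step walk_c adj_cx _; rewrite xc cZ.
by apply: active_step (IH c true walk_c cZ down_c last_z) adj_cx _; rewrite (negbTE cZ).
Qed.

Lemma d_connected_active_walk G Z a b : is_dag G -> d_connected G a b Z ->
  exists h, active_walk G Z a b h.
Proof.
move=> dG [_ [mid [walk ok]]]; exists ((last a mid, b) \in G).
have {}ok : triples_ok (d_connecting G Z) a (a :: rcons mid b) := ok.
elim/last_ind: mid b walk ok => [|m x IH] b; first by rewrite /= andbT => ab _; exact: active_start.
rewrite rcons_path last_rcons => /andP [walk_x xb].
rewrite -rcons_cons; case/triples_ok_rcons; first by rewrite /= size_rcons.
have [-> ->] := nth_cons_rcons_last a m x => /(IH x walk_x) walk_ax.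
rewrite /d_connecting /collider; case: ifP => [/andP [into_x bx]|not_coll xZ]; last first.
  by apply: active_step walk_ax xb _; rewrite not_coll (negbTE xZ).
have [xZ _|xZ down_x] := boolP (x \in Z).
  by apply: active_step walk_ax xb _; rewrite into_x bx xZ.
by apply: active_step (active_walk_detour dG walk_ax xZ down_x) xb _; rewrite (negbTE xZ).
Qed.

End ActiveWalks.

Section CoveredEdges.
Variable V : finType.
Implicit Types (G H : {set V * V}) (Z : {set V}) (a b m x y z : V).

Lemma markov_equiv_sym G H : markov_equiv G H -> markov_equiv H G.
Proof. by move=> GH a b Z ab aZ bZ; apply: iff_sym; apply: GH. Qed.

Lemma markov_equiv_trans G H K : markov_equiv G H -> markov_equiv H K -> markov_equiv G K.
Proof. by move=> GH HK a b Z ab aZ bZ; apply: iff_trans (GH _ _ _ _ _ _) (HK _ _ _ _ _ _). Qed.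

Lemma in_reverse_edge G e x y : ((x, y) \in reverse_edge G e) =
  ((x, y) != e) && ((x, y) \in G) || ((x, y) == (e.2, e.1)).
Proof. by rewrite !inE. Qed.

Lemma in_reverse_edge_other G e x y : (x, y) != e -> (x, y) != (e.2, e.1) ->
  ((x, y) \in reverse_edge G e) = ((x, y) \in G).
Proof. by move=> ne ne'; rewrite in_reverse_edge ne (negbTE ne') orbF. Qed.

Lemma in_reverse_edge_to G v w x y : y != v -> y != w ->
  ((x, y) \in reverse_edge G (v, w)) = ((x, y) \in G).
Proof. by move=> yv yw; rewrite in_reverse_edge_other // xpair_eqE negb_and ?yv ?yw orbT. Qed.

Lemma in_reverse_edge_from G v w x y : x != v -> x != w ->
  ((x, y) \in reverse_edge G (v, w)) = ((x, y) \in G).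
Proof. by move=> xv xw; rewrite in_reverse_edge_other // xpair_eqE negb_and ?xv ?xw. Qed.

Lemma adjacent_sym G : symmetric (adjacent G).
Proof. by move=> x y; rewrite /adjacent orbC. Qed.

Lemma d_connected_two_path G Z a m b : a != b -> adjacent G a m -> adjacent G m b ->
  ~~ collider G a m b -> m \notin Z -> d_connected G a b Z.
Proof.
move=> ab am mb not_coll mZ; split=> //; exists [:: m].
by split; [rewrite /= am mb | case=> [|[|i]] //= _ _; rewrite (negbTE not_coll)].
Qed.

(* Along an active walk from [x] given its parents, every vertex after the first
   step is either a parent of [x] entered backwards or a descendant of [x]. *)
Lemma d_separated_by_parents G x y : is_dag G -> x != y -> ~~ adjacent G x y ->
  ~~ connect (edge_rel G) x y -> d_separated G x y [set p | (p, x) \in G].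
Proof.
move=> dG xy not_adj not_desc /(d_connected_active_walk dG) [h walk_y].
suff [[_ yx]|[_ desc_y]] : (h = false /\ (y, x) \in G) \/ (h /\ connect (edge_rel G) x y).
- by rewrite /adjacent yx orbT in not_adj.
- by rewrite desc_y in not_desc.
elim: walk_y => [u xu|u h' y' _ IH uy' collider_Z].
  case/orP: xu => [xu|ux]; first by right; rewrite xu; split=> //; exact: connect1.
  by left; rewrite (negbTE (dag_asym dG ux)).
move: collider_Z; case: IH => [[-> ux]|[-> desc_u]]; first by rewrite inE ux.
have ux : (u, x) \notin G by apply: contraTN desc_u => /dG.
rewrite inE (negbTE ux) /= => y'u.
have uy'_edge : (u, y') \in G by case/orP: uy' => //; rewrite y'u.
by right; rewrite uy'_edge; split=> //; apply: connect_trans desc_u (connect1 _).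
Qed.

(* Non-adjacent vertices are d-separated by the parents of one of them, so no
   Markov equivalent graph joins them by an open two-edge path. *)
Lemma markov_equiv_nonadjacent G H x m y : is_dag G -> markov_equiv G H ->
  x != y -> ~~ adjacent G x y -> (m, x) \notin G -> (m, y) \notin G ->
  adjacent H x m -> adjacent H m y -> ~~ collider H x m y -> False.
Proof.
move=> dG GH.
wlog not_desc : x y / ~~ connect (edge_rel G) x y => [wlog_xy|].
  have [desc_xy|] := boolP (connect (edge_rel G) x y); last exact: wlog_xy.
  move=> xy not_adj mx my xm my' not_coll.
  apply: (wlog_xy y x _ _ _ my mx); rewrite 1?eq_sym 1?adjacent_sym //.
  - apply: contraNN not_adj => desc_yx.
    by rewrite (dag_connect_antisym dG desc_xy desc_yx) eqxx in xy.
  - by rewrite /collider andbC.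
move=> xy not_adj mx my xm my' not_coll.
have x_notin : x \notin [set p | (p, x) \in G] by rewrite inE dag_irrefl.
have y_notin : y \notin [set p | (p, x) \in G].
  by rewrite inE; apply: contraNN not_adj => yx; rewrite /adjacent yx orbT.
apply: (GH x y _ xy x_notin y_notin).1 (d_separated_by_parents dG xy not_adj not_desc) _.
by apply: d_connected_two_path xy xm my' not_coll _; rewrite inE.
Qed.

(* Chickering's covered edge: pa(e.2) = pa(e.1) + {e.1}. *)
Definition covered G (e : V * V) : Prop :=
  e \in G /\ forall z, z != e.1 -> ((z, e.2) \in G) = ((z, e.1) \in G).

Lemma reversible_covered G v w : is_dag G -> reversible G (v, w) -> covered G (v, w).
Proof.
move=> dG [vw [dG' GG']]; split=> // z /= zv.
set G' := reverse_edge G (v, w) in dG' GG' *.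
have wv : (w, v) \notin G := dag_asym dG vw.
have vNw : v != w by apply: contraTneq vw => ->; exact: dag_irrefl.
have wv' : (w, v) \in G' by rewrite in_reverse_edge eqxx orbT.
have vw' : (v, w) \notin G' by rewrite in_reverse_edge eqxx /= xpair_eqE (negbTE vNw).
have [->|zw] := eqVneq z w; first by rewrite (negbTE (dag_irrefl w dG)) (negbTE wv).
apply/idP/idP => [zw_edge | zv_edge]; apply/negPn/negP => not_edge.
- have vz : (v, z) \notin G.
    apply: contraNN (dG' _ _ wv') => vz.
    apply: (@connect_trans _ _ z); apply: connect1; rewrite /edge_rel /=.
      by rewrite in_reverse_edge_to.
    by rewrite in_reverse_edge_from.
  apply: (markov_equiv_nonadjacent (m := w) dG GG' _ _ wv (dag_asym dG zw_edge)).
  + by rewrite eq_sym.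
  + by rewrite /adjacent negb_or vz.
  + by rewrite /adjacent wv' orbT.
  + by rewrite /adjacent (in_reverse_edge_from _ _ zv zw) zw_edge orbT.
  + by rewrite /collider (negbTE vw').
- have wz : (w, z) \notin G.
    have zvw : connect (edge_rel G) z w by apply: (@connect_trans _ _ v); exact: connect1.
    by apply: contraTN zvw => wz; exact: dG.
  have vz' : (v, z) \notin G' by rewrite in_reverse_edge_to // dag_asym.
  apply: (markov_equiv_nonadjacent (m := v) dG' (markov_equiv_sym GG') zw _ vz' vw').
  + by rewrite /adjacent (in_reverse_edge_from _ _ zv zw) (in_reverse_edge_to _ _ zv zw) (negbTE wz) (negbTE not_edge).
  + by rewrite /adjacent zv_edge.
  + by rewrite /adjacent vw.
  + by rewrite /collider (negbTE wv) andbF.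
Qed.

End CoveredEdges.

(* A Bayes-ball walk inside the block {v, w} of an edge v -> w is in a state
   (at_w, h): the vertex it is at, and whether it entered it along an edge
   pointing into it; zv, zw tell whether v, w lie in the conditioning set.
   [rev_block_step] is the same automaton for the reversed edge w -> v.  A walk
   leaves the block to a parent (of v, equivalently of w when the edge is
   covered), to a child of v or of w, or ends at v or w. *)
Definition block_step (zv zw : bool) : rel (bool * bool) := fun s t =>
  match s, t with
  | (false, _), (true, true) => ~~ zv
  | (true, h), (false, false) => h == zw
  | _, _ => false
  end.

Definition rev_block_step (zv zw : bool) : rel (bool * bool) := fun s t =>
  block_step zw zv (~~ s.1, s.2) (~~ t.1, t.2).

Inductive block_exit := ExitParent | ExitChildV | ExitChildW | EndV | EndW.

Definition exit_from (zv zw : bool) (s : bool * bool) (k : block_exit) : bool :=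
  match s, k with
  | (false, h), ExitParent => h == zv
  | (false, _), ExitChildV => ~~ zv
  | (false, _), EndV => true
  | (true, h), ExitParent => h == zw
  | (true, _), ExitChildW => ~~ zw
  | (true, _), EndW => true
  | _, _ => false
  end.

Definition first_exit_from (at_w : bool) (k : block_exit) : bool :=
  match at_w, k with
  | false, (ExitParent | ExitChildV | EndV) => true
  | true, (ExitParent | ExitChildW | EndW) => true
  | _, _ => false
  end.

Definition block_states : seq (bool * bool) :=
  [:: (false, false); (false, true); (true, false); (true, true)].

Definition block_next (r : rel (bool * bool)) (s : bool * bool) : seq (bool * bool) :=
  filter (r s) block_states.

(* With four states, paths of length at most three reach everything. *)
Definition block_reach (r : rel (bool * bool)) (s : bool * bool) : seq (bool * bool) :=
  let n1 := block_next r s in let n2 := flatten (map (block_next r) n1) in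
  s :: n1 ++ n2 ++ flatten (map (block_next r) n2).

Definition exit_reachable (r : rel (bool * bool)) (zv zw : bool) (s : bool * bool)
    (k : block_exit) : bool :=
  has (exit_from zv zw ^~ k) (block_reach r s).

Lemma exit_reachable_refl r zv zw s k : exit_from zv zw s k -> exit_reachable r zv zw s k.
Proof. by rewrite /exit_reachable /= => ->. Qed.

Lemma block_reach_closed (r : rel (bool * bool)) (P : bool * bool -> Prop) :
  (forall s t, P s -> r s t -> P t) -> forall s t, P s -> t \in block_reach r s -> P t.
Proof.
move=> P_step s t Ps; have P_next s0 t0 : P s0 -> t0 \in block_next r s0 -> P t0.
  by move=> Ps0; rewrite mem_filter => /andP [/(P_step _ _ Ps0)].
rewrite inE => /predU1P [-> //|]; rewrite !mem_cat => /or3P [|/flatten_mapP|/flatten_mapP].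
- exact: P_next.
- by case=> s1 /(P_next _ _ Ps); apply: P_next.
by case=> s2 /flatten_mapP [s1 /(P_next _ _ Ps) Ps1 /(P_next _ _ Ps1)]; apply: P_next.
Qed.

Lemma exit_reachable_step zv zw s t k : block_step zv zw s t ->
  exit_reachable (block_step zv zw) zv zw t k -> exit_reachable (block_step zv zw) zv zw s k.
Proof. by case: zv zw s t => [] [] [[] []] [[] []]; case: k. Qed.

Lemma exits_enter_from_parent zv zw at_w k :
  exit_reachable (block_step zv zw) zv zw (at_w, true) k ->
  exit_reachable (rev_block_step zv zw) zv zw (false, true) k ||
  exit_reachable (rev_block_step zv zw) zv zw (true, true) k.
Proof. by case: zv zw at_w => [] [] []; case: k. Qed.

Lemma exits_enter_v zv zw k :
  exit_reachable (block_step zv zw) zv zw (false, false) k ->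
  exit_reachable (rev_block_step zv zw) zv zw (false, false) k.
Proof. by case: zv zw => [] []; case: k. Qed.

Lemma exits_enter_w zv zw k :
  exit_reachable (block_step zv zw) zv zw (true, false) k ->
  exit_reachable (rev_block_step zv zw) zv zw (true, false) k.
Proof. by case: zv zw => [] []; case: k. Qed.

Lemma exits_start_v zv zw k :
  exit_reachable (block_step zv zw) zv zw (true, true) k ->
  first_exit_from false k || exit_reachable (rev_block_step zv zw) zv zw (true, false) k.
Proof. by case: zv zw => [] []; case: k. Qed.

Lemma exits_start_w zv zw k :
  exit_reachable (block_step zv zw) zv zw (false, false) k ->
  first_exit_from true k || exit_reachable (rev_block_step zv zw) zv zw (false, true) k.
Proof. by case: zv zw => [] []; case: k. Qed.

Section CoveredReversal.
Variables (V : finType) (G : {set V * V}) (v w : V).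
Hypotheses (dG : is_dag G) (cov : covered G (v, w)).

Let G' := reverse_edge G (v, w).
Let vw : (v, w) \in G := cov.1.
Let pa_w : forall z, z != v -> ((z, w) \in G) = ((z, v) \in G) := cov.2.
Let vNw : v != w.
Proof. by apply: contraTneq vw => ->; exact: dag_irrefl. Qed.
Let wv : (w, v) \notin G := dag_asym dG vw.
Let wv' : (w, v) \in G'.
Proof. by rewrite in_reverse_edge eqxx orbT. Qed.
Let vw' : ((v, w) \in G') = false.
Proof. by rewrite in_reverse_edge eqxx /= xpair_eqE (negbTE vNw). Qed.

Lemma adjacent_rev_to x y : y != v -> y != w -> adjacent G' x y = adjacent G x y.
Proof. by move=> yv yw; rewrite /adjacent in_reverse_edge_to // in_reverse_edge_from. Qed.

Lemma adjacent_rev_from x y : x != v -> x != w -> adjacent G' x y = adjacent G x y.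
Proof. by move=> xv xw; rewrite /adjacent in_reverse_edge_from // in_reverse_edge_to. Qed.

Lemma parent_v_outside p : (p, v) \in G -> (p != v) && (p != w).
Proof.
move=> pv; apply/andP; split; apply: contraTneq pv => ->; first exact: dag_irrefl.
exact: wv.
Qed.

Let Gm := G :\ (v, w).

Lemma connect_setD1_vw x y : connect (edge_rel Gm) x y -> connect (edge_rel G) x y.
Proof. by apply: connect_sub => x0 y0 /setD1P [_ e]; exact: connect1. Qed.

(* A step [x -> w -> v] of a [G']-path is shortcut by the edge [x -> v] of [G]
   given by coveredness, so only a path starting at [w] needs [w -> v]. *)
Lemma rev_path_connect x p : path (edge_rel G') x p ->
  connect (edge_rel Gm) x (last x p) \/ x = w /\ connect (edge_rel Gm) v (last x p).
Proof.
elim: p x => [|c p IH] x /=; first by left; exact: connect0.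
case/andP=> xc path_c; have {}xc : (x, c) \in G' := xc.
move: xc; rewrite in_reverse_edge /= => /orP [/andP [ne xc]|]; last first.
  rewrite xpair_eqE => /andP [/eqP -> /eqP c_v]; subst c.
  by case: (IH _ path_c) => [|[v_w _]]; [right | move: vNw; rewrite v_w eqxx].
left; case: (IH _ path_c) => [|[c_w]]; apply: connect_trans; apply: connect1.
  by rewrite /edge_rel /= in_setD1 ne.
subst c; have xv : x != v by apply: contraNneq ne => ->.
by rewrite /edge_rel /= in_setD1 xpair_eqE negb_and xv -pa_w.
Qed.

Lemma covered_reverse_dag : is_dag G'.
Proof.
move=> x y xy; apply/negP => /connectP [p path_p last_p].
have [|[y_w]] := rev_path_connect path_p; rewrite -last_p => desc.
- move: xy; rewrite in_reverse_edge /= => /orP [/andP [_ xy]|].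
    by move: (dG xy); rewrite connect_setD1_vw.
  rewrite xpair_eqE => /andP [/eqP x_w /eqP y_v]; rewrite {}x_w {}y_v in desc.
  have [c vc cw] := connect_last desc vNw.
  move: cw; rewrite /edge_rel /= in_setD1 xpair_eqE => /andP [ne cw].
  have cv : c != v by apply: contraNneq ne => ->; rewrite !eqxx.
  have cvG : (c, v) \in G by rewrite -pa_w.
  by move: (dG cvG); rewrite connect_setD1_vw.
move: xy; rewrite y_w in_reverse_edge /= !xpair_eqE eqxx andbT [w == v]eq_sym (negbTE vNw).
rewrite andbF orbF.
case/andP=> ne xw; have xv : x != v by apply: contraNneq ne => ->.
have xvG : (x, v) \in G by rewrite -pa_w.
by move: (dG xvG); rewrite connect_setD1_vw.
Qed.

Definition in_block (x : V) : bool := (x == v) || (x == w).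

Lemma block_neighbour_orient x y0 y1 : x != v -> in_block y0 -> in_block y1 ->
  adjacent G x y0 -> adjacent G x y1 -> ((y1, x) \in G) = ((y0, x) \in G).
Proof.
move=> xv.
have orient : adjacent G x v -> adjacent G x w -> ((v, x) \in G) = ((w, x) \in G).
  move=> xv_adj xw_adj; apply/idP/idP => [vx|wx].
    case/orP: xw_adj => // xw; rewrite pa_w // in xw.
    by move: (dag_asym dG vx); rewrite xw.
  case/orP: xv_adj => // xv_edge; rewrite -pa_w // in xv_edge.
  by move: (dag_asym dG wx); rewrite xv_edge.
by case/orP=> /eqP -> /orP [] /eqP -> // adj0 adj1; rewrite orient.
Qed.

Section Simulation.
Variables (Z : {set V}) (a : V).

Let zv := v \in Z.
Let zw := w \in Z.
Let R' := active_walk G' Z a.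

Lemma rev_start y h : adjacent G' a y -> ((a, y) \in G') = h -> R' y h.
Proof. by move=> ay <-; exact: active_start. Qed.

Lemma rev_step x h y h' : R' x h -> adjacent G' x y ->
  (h && ((y, x) \in G')) = (x \in Z) -> ((x, y) \in G') = h' -> R' y h'.
Proof. by move=> walk_x xy collider_Z <-; exact: active_step walk_x xy collider_Z. Qed.

Definition exit_realized (k : block_exit) : Prop :=
  match k with
  | ExitParent => forall p, (p, v) \in G -> R' p false
  | ExitChildV => forall c, (v, c) \in G -> c != w -> R' c true
  | ExitChildW => forall d, (w, d) \in G -> R' d true
  | EndV => (exists h, R' v h) \/ v = a
  | EndW => (exists h, R' w h) \/ w = a
  end.

Definition block_state_reached (s : bool * bool) : Prop := R' (if s.1 then w else v) s.2.

Definition block_invariant (s : bool * bool) : Prop :=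
  forall k, exit_reachable (block_step zv zw) zv zw s k -> exit_realized k.

Lemma block_state_reached_step s t : block_state_reached s ->
  rev_block_step zv zw s t -> block_state_reached t.
Proof.
case: s t => [[] h] [[] []] //= walk_s.
  move=> zwF; apply: rev_step walk_s _ _ _; rewrite ?vw' //.
    by rewrite /adjacent wv'.
  by rewrite andbF; apply/esym/negbTE.
move=> /eqP h_zv; apply: rev_step walk_s _ _ _; rewrite ?wv' ?andbT //.
by rewrite /adjacent wv' orbT.
Qed.

Lemma exit_from_reached s k : block_state_reached s -> exit_from zv zw s k -> exit_realized k.
Proof.
case: s => [[] h]; case: k => //= walk_s.
- move=> /eqP h_zw p pv; case/andP: (parent_v_outside pv) => p1 p2.
  have pw : (p, w) \in G by rewrite pa_w.
  apply: rev_step walk_s _ _ _.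
  + by rewrite /adjacent (in_reverse_edge_from _ _ p1 p2) pw orbT.
  + by rewrite (in_reverse_edge_from _ _ p1 p2) pw andbT.
  + by rewrite (in_reverse_edge_to _ _ p1 p2) (negbTE (dag_asym dG pw)).
- move=> zwF d wd.
  have d1 : d != v by apply: contraTneq wd => ->.
  have d2 : d != w by apply: contraTneq wd => ->; exact: dag_irrefl.
  apply: rev_step walk_s _ _ _.
  + by rewrite /adjacent (in_reverse_edge_to _ _ d1 d2) wd.
  + by rewrite (in_reverse_edge_from _ _ d1 d2) (negbTE (dag_asym dG wd)) andbF; apply/esym/negbTE.
  + by rewrite (in_reverse_edge_to _ _ d1 d2) wd.
- by left; exists h.
- move=> /eqP h_zv p pv; case/andP: (parent_v_outside pv) => p1 p2.
  apply: rev_step walk_s _ _ _.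
  + by rewrite /adjacent (in_reverse_edge_from _ _ p1 p2) pv orbT.
  + by rewrite (in_reverse_edge_from _ _ p1 p2) pv andbT.
  + by rewrite (in_reverse_edge_to _ _ p1 p2) (negbTE (dag_asym dG pv)).
- move=> zvF c vc cw.
  have c1 : c != v by apply: contraTneq vc => ->; exact: dag_irrefl.
  apply: rev_step walk_s _ _ _.
  + by rewrite /adjacent (in_reverse_edge_to _ _ c1 cw) vc.
  + by rewrite (in_reverse_edge_from _ _ c1 cw) (negbTE (dag_asym dG vc)) andbF; apply/esym/negbTE.
  + by rewrite (in_reverse_edge_to _ _ c1 cw) vc.
- by left; exists h.
Qed.

Lemma exit_reachable_reached s k : block_state_reached s ->
  exit_reachable (rev_block_step zv zw) zv zw s k -> exit_realized k.
Proof.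
move=> reached_s /hasP [t t_reach exit_t]; apply: exit_from_reached exit_t.
exact: block_reach_closed block_state_reached_step _ _ reached_s t_reach.
Qed.

Lemma block_step_walk x h y : in_block x -> in_block y -> adjacent G x y ->
  (h && ((y, x) \in G)) = (x \in Z) -> block_step zv zw (x == w, h) (y == w, (x, y) \in G).
Proof.
case/orP=> /eqP -> /orP [] /eqP ->; rewrite ?eqxx ?(negbTE vNw) ?vw ?(negbTE wv) /=.
- by rewrite /adjacent (negbTE (dag_irrefl _ dG)).
- by rewrite andbF => _ zvF; rewrite /zv -zvF.
- by rewrite andbT => _ ->.
- by rewrite /adjacent (negbTE (dag_irrefl _ dG)).
Qed.

Lemma block_exit_walk x h y : block_invariant (x == w, h) -> in_block x -> ~~ in_block y ->
  adjacent G x y -> (h && ((y, x) \in G)) = (x \in Z) -> R' y ((x, y) \in G).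
Proof.
move=> inv /orP [] /eqP x_eq; subst x; rewrite /in_block negb_or => /andP [y1 y2] xy collider_Z.
- rewrite (negbTE vNw) in inv.
  have [yv|yv] := boolP ((y, v) \in G).
    rewrite yv andbT in collider_Z; rewrite (negbTE (dag_asym dG yv)).
    by apply: (inv ExitParent) => //; apply: exit_reachable_refl; rewrite /= collider_Z.
  have vy : (v, y) \in G by move: xy; rewrite /adjacent (negbTE yv) orbF.
  rewrite (negbTE yv) andbF in collider_Z; rewrite vy.
  by apply: (inv ExitChildV) => //; apply: exit_reachable_refl; rewrite /= /zv -collider_Z.
- rewrite eqxx in inv.
  have [yw|yw] := boolP ((y, w) \in G).
    rewrite yw andbT in collider_Z; rewrite (negbTE (dag_asym dG yw)).
    by apply: (inv ExitParent); [apply: exit_reachable_refl; rewrite /= collider_Z | rewrite -pa_w].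
  have wy : (w, y) \in G by move: xy; rewrite /adjacent (negbTE yw) orbF.
  rewrite (negbTE yw) andbF in collider_Z; rewrite wy.
  by apply: (inv ExitChildW) => //; apply: exit_reachable_refl; rewrite /= /zw -collider_Z.
Qed.

Lemma block_entry u y : u != v -> u != w ->
  (forall y1, in_block y1 -> adjacent G u y1 -> R' y1 ((u, y1) \in G)) ->
  in_block y -> adjacent G u y -> block_invariant (y == w, (u, y) \in G).
Proof.
move=> u1 u2 enter y_in uy.
have [uv|uv] := boolP ((u, v) \in G).
  have uw : (u, w) \in G by rewrite pa_w.
  have Rv : R' v true by have := enter v; rewrite /in_block eqxx /adjacent uv; apply.
  have Rw : R' w true by have := enter w; rewrite /in_block eqxx orbT /adjacent uw; apply.
  have -> : (u, y) \in G by case/orP: y_in => /eqP ->.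
  move=> k /exits_enter_from_parent /orP [] reach.
    exact: (exit_reachable_reached (s := (false, true)) Rv reach).
  exact: (exit_reachable_reached (s := (true, true)) Rw reach).
have uw : ((u, w) \in G) = false by rewrite pa_w // (negbTE uv).
case/orP: y_in uy => /eqP -> uy.
  have Rv : R' v false by have := enter v; rewrite /in_block eqxx (negbTE uv); apply.
  rewrite (negbTE uv) (negbTE vNw) => k /exits_enter_v reach.
  exact: (exit_reachable_reached (s := (false, false)) Rv reach).
have Rw : R' w false by have := enter w; rewrite /in_block eqxx orbT uw; apply.
rewrite uw eqxx => k /exits_enter_w reach.
exact: (exit_reachable_reached (s := (true, false)) Rw reach).
Qed.

Lemma block_start_v : a = v -> block_invariant (true, true).
Proof.
move=> av k /exits_start_v /orP [|reach]; last first.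
  have Rw : R' w false by apply: rev_start; rewrite av ?vw' // /adjacent vw' wv' orbT.
  exact: (exit_reachable_reached (s := (true, false)) Rw reach).
case: k => //= _.
- move=> p pv; case/andP: (parent_v_outside pv) => p1 p2; apply: rev_start.
    by rewrite av (adjacent_rev_to _ p1 p2) /adjacent pv orbT.
  by rewrite av (in_reverse_edge_to _ _ p1 p2) (negbTE (dag_asym dG pv)).
- move=> c vc cw; have c1 : c != v by apply: contraTneq vc => ->; exact: dag_irrefl.
  apply: rev_start; first by rewrite av (adjacent_rev_to _ c1 cw) /adjacent vc.
  by rewrite av (in_reverse_edge_to _ _ c1 cw) vc.
- by right.
Qed.

Lemma block_start_w : a = w -> block_invariant (false, false).
Proof.
move=> aw k /exits_start_w /orP [|reach]; last first.
  have Rv : R' v true by apply: rev_start; rewrite aw ?wv' // /adjacent wv'.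
  exact: (exit_reachable_reached (s := (false, true)) Rv reach).
case: k => //= _.
- move=> p pv; case/andP: (parent_v_outside pv) => p1 p2.
  have pw : (p, w) \in G by rewrite pa_w.
  apply: rev_start; first by rewrite aw (adjacent_rev_to _ p1 p2) /adjacent pw orbT.
  by rewrite aw (in_reverse_edge_to _ _ p1 p2) (negbTE (dag_asym dG pw)).
- move=> d wd.
  have d1 : d != v by apply: contraTneq wd => ->.
  have d2 : d != w by apply: contraTneq wd => ->; exact: dag_irrefl.
  apply: rev_start; first by rewrite aw (adjacent_rev_to _ d1 d2) /adjacent wd.
  by rewrite aw (in_reverse_edge_to _ _ d1 d2) wd.
- by right.
Qed.

(* Walks are simulated vertex by vertex away from [{v, w}]; inside it the
   invariant records that every way out of the block is available in [G']. *)
Lemma active_walk_reverse y h : active_walk G Z a y h ->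
  if in_block y then block_invariant (y == w, h) else R' y h.
Proof.
elim=> [u au | x h' u walk_x IH xu collider_Z].
  have [u_in|u_out] := boolP (in_block u); last first.
    move: u_out; rewrite /in_block negb_or => /andP [u1 u2].
    by apply: rev_start; rewrite ?(adjacent_rev_to _ u1 u2) ?(in_reverse_edge_to _ _ u1 u2).
  have [a_in|a_out] := boolP (in_block a); last first.
    move: a_out; rewrite /in_block negb_or => /andP [a1 a2].
    apply: block_entry => // y1 _ ay1.
    by apply: rev_start; rewrite ?(adjacent_rev_from _ a1 a2) ?(in_reverse_edge_from _ _ a1 a2).
  case/orP: a_in => /eqP a_eq; rewrite a_eq in au *; case/orP: u_in au => /eqP ->.
  - by rewrite /adjacent (negbTE (dag_irrefl _ dG)).
  - by rewrite vw eqxx => _; exact: block_start_v.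
  - by rewrite (negbTE wv) (negbTE vNw) => _; exact: block_start_w.
  - by rewrite /adjacent (negbTE (dag_irrefl _ dG)).
have [x_in|x_out] := boolP (in_block x); rewrite ?x_in ?(negbTE x_out) in IH;
  have [u_in|u_out] := boolP (in_block u).
- move=> k reach; apply: IH.
  exact: exit_reachable_step (block_step_walk x_in u_in xu collider_Z) reach.
- exact: block_exit_walk IH x_in u_out xu collider_Z.
- move: x_out; rewrite /in_block negb_or => /andP [x1 x2].
  apply: block_entry => // y1 y1_in xy1; apply: rev_step IH _ _ _.
  + by rewrite (adjacent_rev_from _ x1 x2).
  + by rewrite (in_reverse_edge_to _ _ x1 x2) (block_neighbour_orient x1 u_in y1_in xu xy1).
  + by rewrite (in_reverse_edge_from _ _ x1 x2).
- move: x_out u_out; rewrite /in_block !negb_or => /andP [x1 x2] /andP [u1 u2].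
  by apply: rev_step IH _ _ _; rewrite ?(adjacent_rev_from _ x1 x2) ?(in_reverse_edge_to _ _ x1 x2)
    ?(in_reverse_edge_from _ _ x1 x2).
Qed.

Lemma d_connected_covered_reverse b : d_connected G a b Z -> d_connected G' a b Z.
Proof.
move=> conn; have ab := conn.1; have [h walk_b] := d_connected_active_walk dG conn.
have := active_walk_reverse walk_b; case: ifP => [b_in|_]; last exact: active_walk_d_connected.
case/orP: b_in => /eqP b_eq; rewrite b_eq in ab * => inv.
  rewrite (negbTE vNw) in inv.
  have [[h' walk_v]|v_a] := inv EndV isT.
    exact: active_walk_d_connected walk_v.
  by rewrite v_a eqxx in ab.
rewrite eqxx in inv.
have [[h' walk_w]|w_a] := inv EndW isT.
  exact: active_walk_d_connected walk_w.
by rewrite w_a eqxx in ab.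
Qed.

End Simulation.

End CoveredReversal.

Section MatchingReversal.
Variable V : finType.
Implicit Types (G S T : {set V * V}) (e f : V * V).

Lemma reverse_edgeK G v w : (v, w) \in G -> (w, v) \notin G ->
  reverse_edge (reverse_edge G (v, w)) (w, v) = G.
Proof.
move=> vw wv; apply/setP => -[x y]; rewrite !in_reverse_edge /=.
have [[-> ->]|xy_vw] := eqVneq (x, y) (v, w); first by rewrite vw orbT.
have [[-> ->]|xy_wv] := eqVneq (x, y) (w, v); first by rewrite (negbTE wv).
by rewrite /= !orbF.
Qed.

Lemma covered_reverse G v w : is_dag G -> covered G (v, w) ->
  covered (reverse_edge G (v, w)) (w, v).
Proof.
move=> dG [vw pa_w]; have vNw : v != w by apply: contraTneq vw => ->; exact: dag_irrefl.
split=> [|z /= zw]; first by rewrite in_reverse_edge eqxx orbT.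
have [->|zv] := eqVneq z v.
  rewrite !in_reverse_edge /= !xpair_eqE !eqxx /= (negbTE (dag_irrefl _ dG)).
  by rewrite (negbTE vNw) andbF.
by rewrite !in_reverse_edge_other ?pa_w // xpair_eqE negb_and ?zv ?zw.
Qed.

Lemma covered_reverse_markov_equiv G v w : is_dag G -> covered G (v, w) ->
  markov_equiv G (reverse_edge G (v, w)).
Proof.
move=> dG cov a b Z _ _ _; split=> sep conn; apply: sep.
  have := d_connected_covered_reverse (covered_reverse_dag dG cov) (covered_reverse dG cov) conn.
  by rewrite reverse_edgeK //; [case: cov | exact: dag_asym dG cov.1].
by have := d_connected_covered_reverse dG cov conn.
Qed.

Lemma covered_reverse_disjoint G e f : covered G e ->
  [/\ e.1 != f.1, e.1 != f.2, e.2 != f.1 & e.2 != f.2] -> covered (reverse_edge G f) e.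
Proof.
case: e f => [x y] [v w] [xy pa_y] /= [xv xw yv yw].
split=> [|z zx]; first by rewrite in_reverse_edge_other // xpair_eqE negb_and ?xv ?xw.
by rewrite !in_reverse_edge_other ?pa_y // xpair_eqE negb_and ?xv ?xw ?yv ?yw orbT.
Qed.

Definition reverse_edges G T : {set V * V} :=
  [set e | (e \in G) && (e \notin T) || ((e.2, e.1) \in T)].

Lemma reverse_edges0 G : reverse_edges G set0 = G.
Proof. by apply/setP => e; rewrite !inE andbT orbF. Qed.

Lemma reverse_edge_reverse_edges G T f : (f.2, f.1) \notin T -> f.1 != f.2 ->
  reverse_edge (reverse_edges G T) f = reverse_edges G (f |: T).
Proof.
case: f => [v w] /= wvT vNw; apply/setP => -[x y]; rewrite in_reverse_edge !inE /=.
have [[-> ->]|xy_vw] := eqVneq (x, y) (v, w).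
  by rewrite /= andbF !xpair_eqE (negbTE vNw) eq_sym (negbTE vNw) (negbTE wvT).
have [[-> ->]|xy_wv] := eqVneq (x, y) (w, v); first by rewrite eqxx !orbT.
have yx_vw : (y, x) != (v, w) by apply: contraNneq xy_wv => -[-> ->].
by rewrite (negbTE yx_vw) /= orbF.
Qed.

Lemma mem_reverse_edges G T e : is_dag G -> T \subset G -> e \in G ->
  (e \in reverse_edges G T) = (e \notin T).
Proof.
case: e => x y dG TG xy; rewrite inE xy /=.
suff -> : ((y, x) \in T) = false by rewrite orbF.
by apply: contraNF (dag_asym dG xy) => /(subsetP TG).
Qed.

Lemma reverse_edges_inj G : is_dag G -> {in powerset G &, injective (reverse_edges G)}.
Proof.
move=> dG T1 T2 /[!inE] T1G T2G eqT; apply/setP => e.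
have [eG|eG] := boolP (e \in G); last first.
  by rewrite (contraNF (subsetP T1G e)) // (contraNF (subsetP T2G e)).
by apply: negb_inj; rewrite -(mem_reverse_edges dG T1G eG) -(mem_reverse_edges dG T2G eG) eqT.
Qed.

(* Reversing one more edge of [S] is the reversal of a covered edge, and it
   leaves the other edges of [S] covered since none shares an endpoint with it. *)
Lemma reverse_edges_markov_equiv G S T : is_dag G -> S \subset G ->
  {in S, forall e, covered G e} -> is_matching S -> T \subset S ->
  [/\ is_dag (reverse_edges G T), markov_equiv G (reverse_edges G T)
    & {in S :\: T, forall e, covered (reverse_edges G T) e}].
Proof.
move=> dG SG cov_S match_S; elim: {T}#|T| {-2}T (erefl #|T|) => [|n IH] T card_T TS.
  move/eqP: card_T; rewrite cards_eq0 => /eqP ->; rewrite reverse_edges0.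
  by split=> // e /setDP [eS _]; exact: cov_S.
have /set0Pn [[x y] xyT] : T != set0 by rewrite -card_gt0 card_T.
have xyS := subsetP TS _ xyT; have xy := subsetP SG _ xyS.
set T0 := T :\ (x, y).
have card_T0 : #|T0| = n by move: card_T; rewrite (cardsD1 (x, y) T) xyT => -[].
have T0T : T0 \subset T := subD1set T (x, y).
have [dag0 equiv0 cov0] := IH T0 card_T0 (subset_trans T0T TS).
have cov_xy : covered (reverse_edges G T0) (x, y) by apply: cov0; rewrite !inE eqxx xyS.
have yx_T0 : (y, x) \notin T0.
  by apply: contraNN (dag_asym dG xy) => /(subsetP T0T) /(subsetP TS) /(subsetP SG).
have xNy : x != y by apply: contraTneq xy => ->; exact: dag_irrefl.
have <- : reverse_edge (reverse_edges G T0) (x, y) = reverse_edges G T.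
  by rewrite reverse_edge_reverse_edges // setD1K.
split.
- exact: covered_reverse_dag.
- exact: markov_equiv_trans equiv0 (covered_reverse_markov_equiv dag0 cov_xy).
move=> e /setDP [eS eT]; apply: covered_reverse_disjoint.
  by apply: cov0; rewrite inE eS (contraNN (subsetP T0T e) eT).
by apply: match_S => //; apply: contraNneq eT => ->.
Qed.

End MatchingReversal.

Theorem mainTheorem4 (V : finType) (G S : {set V * V}) :
  is_dag G ->
  S \subset G ->
  (forall e, e \in S -> reversible G e) ->
  is_matching S ->
  2 ^ #|S| <= #|MEC G|.
Proof.
move=> dG SG rev_S match_S.
have cov_S : {in S, forall e, covered G e} by move=> [v w] /rev_S; exact: reversible_covered.
have inj : {in powerset S &, injective (reverse_edges G)}.
  move=> T1 T2 /[!inE] T1S T2S; apply: (reverse_edges_inj dG); rewrite inE.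
    exact: subset_trans T1S SG.
  exact: subset_trans T2S SG.
rewrite -(card_powerset S) -(card_in_imset inj); apply: subset_leq_card.
apply/subsetP => H /imsetP [T]; rewrite inE => TS ->.
have [dag_T equiv_T _] := reverse_edges_markov_equiv dG SG cov_S match_S TS.
by rewrite inE; apply/asboolP.
Qed.
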